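(* Let $\mathbb{D}\subset\mathbb{C}$ be the unit disc and $\mathbb{B}^n\subset\mathbb{R}^n$, $n\ge 3$, the open unit ball. Assume $f:\mathbb{D}\to\mathbb{B}^n$ is a conformal minimal immersion. Then for every $a\in\mathbb{D}$, $$\|f(a)\|\ \le\ \frac{|a|+\|f(0)\|}{1+|a|\,\|f(0)\|}.$$
   Context: A conformal minimal immersion $f=f(x,y)$, $z=x+iy$, is a harmonic immersion satisfying $\langle f_x,f_x\rangle=\langle f_y,f_y\rangle$ and $\langle f_x,f_y\rangle=0$. $\|\cdot\|$ is the Euclidean norm. *)

From Stdlib Require Import Reals Lra List.
From Coquelicot Require Import Coquelicot.
Import ListNotations.
Open Scope R_scope.

(* A map f : D -> R^n is represented by its components f i : R -> R -> R,
   i = 0..n-1, as functions of (x, y), z = x + i y. *)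

Definition dotn (n : nat) (u v : nat -> R) : R :=
  fold_right Rplus 0 (map (fun i => u i * v i) (seq 0 n)).
Definition normn (n : nat) (u : nat -> R) : R := sqrt (dotn n u u).

Definition in_disc (x y : R) : Prop := x ^ 2 + y ^ 2 < 1.
Definition in_ball (n : nat) (u : nat -> R) : Prop := normn n u < 1.

Definition dx (g : R -> R -> R) (x y : R) : R := Derive (fun t => g t y) x.
Definition dy (g : R -> R -> R) (x y : R) : R := Derive (fun t => g x t) y.

Definition C2_at (g : R -> R -> R) (x y : R) : Prop :=
  (exists e : posreal, forall u v, Rabs (u - x) < e -> Rabs (v - y) < e ->
     ex_derive (fun t => g t v) u /\ ex_derive (fun t => g u t) v /\
     ex_derive (fun t => dx g t v) u /\ ex_derive (fun t => dx g u t) v /\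
     ex_derive (fun t => dy g t v) u /\ ex_derive (fun t => dy g u t) v) /\
  continuity_2d_pt g x y /\
  continuity_2d_pt (dx g) x y /\ continuity_2d_pt (dy g) x y /\
  continuity_2d_pt (dx (dx g)) x y /\ continuity_2d_pt (dy (dx g)) x y /\
  continuity_2d_pt (dx (dy g)) x y /\ continuity_2d_pt (dy (dy g)) x y.

Definition harmonic_on_disc (n : nat) (f : nat -> R -> R -> R) : Prop :=
  forall i, (i < n)%nat -> forall x y, in_disc x y ->
    C2_at (f i) x y /\ dx (dx (f i)) x y + dy (dy (f i)) x y = 0.

Definition fx (f : nat -> R -> R -> R) (x y : R) : nat -> R :=
  fun i => dx (f i) x y.
Definition fy (f : nat -> R -> R -> R) (x y : R) : nat -> R :=
  fun i => dy (f i) x y.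

Definition immersion_on_disc (n : nat) (f : nat -> R -> R -> R) : Prop :=
  forall x y, in_disc x y -> forall a b : R,
    (forall i, (i < n)%nat -> a * fx f x y i + b * fy f x y i = 0) ->
    a = 0 /\ b = 0.

Definition conformal_minimal_immersion (n : nat) (f : nat -> R -> R -> R) : Prop :=
  harmonic_on_disc n f /\ immersion_on_disc n f /\
  forall x y, in_disc x y ->
    dotn n (fx f x y) (fx f x y) = dotn n (fy f x y) (fy f x y) /\
    dotn n (fx f x y) (fy f x y) = 0.

Definition fpt (f : nat -> R -> R -> R) (x y : R) : nat -> R := fun i => f i x y.

From Stdlib Require Import Reals Lra Lia Psatz List.
From Coquelicot Require Import Coquelicot.
Open Scope R_scope.
Set Bullet Behavior "Strict Subproofs".

(* Fix a unit vector [e] and a point [z] of the disc. The function [<f, e>] is harmonic with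
   values in (-1, 1), and by conformality the tangent plane of [f] at [z] contains a unit vector
   [nu] orthogonal to [e] such that the derivative of [<f, nu>] in the direction orthogonal to
   the gradient of [<f, e>] is [|f_x(z)| >= |grad <f, e>(z)|]. Compose the harmonic map
   [(<f, e>, <f, nu>)], which takes values in the closed unit disc, with the automorphism of
   the disc sending [0] to [z]: on the circles [|zeta| = r], its mean and first Fourier
   coefficients are given by the value and the gradient at [z], because Laplace's equation in
   polar coordinates makes the mean constant and the first modes linear in [r]. Integrating
   against these circles an elementary bound for points of the unit disc gives
     (1 - |z|^2) |grad <f, e>(z)| <= 1 - <f(z), e>^2.
   On the segment from [0] to [a], with [e = f(a) / |f(a)|] and [h(t) = <f(t a), e>], this
   makes [(1 + h) / (1 - h) * (1 - t |a|) / (1 + t |a|)] nonincreasing, which is the claim. *)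

(** * Calculus on the line and on the plane *)

Lemma is_derive_eq (f : R -> R) (x l l' : R) : is_derive f x l -> l = l' -> is_derive f x l'.
Proof. intros H <-; exact H. Qed.

Lemma is_derive_ext_R (f g : R -> R) x l :
  (forall t, f t = g t) -> is_derive f x l -> is_derive g x l.
Proof. exact (is_derive_ext f g x l). Qed.

Lemma is_derive_Rplus (f g : R -> R) x df dg :
  is_derive f x df -> is_derive g x dg -> is_derive (fun t => f t + g t) x (df + dg).
Proof. intros Hf Hg. apply (is_derive_plus f g x df dg Hf Hg). Qed.

Lemma is_derive_Rmult (f g : R -> R) x df dg :
  is_derive f x df -> is_derive g x dg ->
  is_derive (fun t => f t * g t) x (df * g x + f x * dg).
Proof. intros Hf Hg. apply (is_derive_mult f g x df dg Hf Hg). intros; apply Rmult_comm. Qed.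

Lemma is_derive_mult_const_r (f : R -> R) x l c :
  is_derive f x l -> is_derive (fun y => f y * c) x (l * c).
Proof. intro H. exact (is_derive_scal_l f x l c H). Qed.

Lemma is_derive_continuity_pt (f : R -> R) x l : is_derive f x l -> continuity_pt f x.
Proof. intro H. apply derivable_continuous_pt, ex_derive_Reals_0. exists l; exact H. Qed.

Lemma eq_of_is_derive_0 (p : R -> R) a b :
  a <= b ->
  (forall x, a <= x <= b -> continuity_pt p x) ->
  (forall x, a < x < b -> is_derive p x 0) -> p a = p b.
Proof.
  intros Hab Hc Hd.
  destruct (MVT_gen p a b (fun _ => 0)) as [c [_ Hpc]].
  - intros x Hx. rewrite Rmin_left, Rmax_right in Hx by lra. apply Hd, Hx.
  - intros x Hx. rewrite Rmin_left, Rmax_right in Hx by lra. apply Hc, Hx.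
  - lra.
Qed.

Lemma eq_of_is_derive_0_open (p : R -> R) a b x y :
  (forall z, a < z < b -> is_derive p z 0) -> a < x < b -> a < y < b -> p x = p y.
Proof.
  intros Hd Hx Hy.
  assert (Hcont : forall z, a < z < b -> continuity_pt p z)
    by (intros z Hz; apply (is_derive_continuity_pt _ _ _ (Hd z Hz))).
  destruct (Rle_dec x y).
  - apply eq_of_is_derive_0; [assumption| |]; intros z Hz; [apply Hcont|apply Hd]; lra.
  - symmetry; apply eq_of_is_derive_0; [lra| |]; intros z Hz; [apply Hcont|apply Hd]; lra.
Qed.

Lemma le_of_is_derive_nonpos (p dp : R -> R) a b :
  a <= b -> (forall x, a <= x <= b -> is_derive p x (dp x)) ->
  (forall x, a <= x <= b -> dp x <= 0) -> p b <= p a.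
Proof.
  intros Hab Hd Hneg.
  destruct (MVT_gen p a b dp) as [c [Hc Hpc]].
  - intros x Hx. rewrite Rmin_left, Rmax_right in Hx by lra. apply Hd; lra.
  - intros x Hx. rewrite Rmin_left, Rmax_right in Hx by lra.
    apply (is_derive_continuity_pt _ _ _ (Hd x Hx)).
  - rewrite Rmin_left, Rmax_right in Hc by lra.
    generalize (Hneg c Hc). nra.
Qed.

Lemma is_derive_0_of_linear_right (N : R -> R) c l :
  N 0 = 0 -> is_derive N 0 l -> (forall x, 0 < x < 1 -> N x = c * x) -> c = l.
Proof.
  intros HN0 Hd Hlin. apply is_derive_Reals in Hd.
  destruct (Req_dec c l) as [|Hcl]; [assumption|exfalso].
  destruct (Hd (Rabs (c - l)) (Rabs_pos_lt _ (Rminus_eq_contra _ _ Hcl))) as [d Hdl].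
  set (h := Rmin (d / 2) (1 / 2)).
  assert (Hh : 0 < h) by (apply Rmin_pos; generalize (cond_pos d); lra).
  assert (Hh1 : h < 1) by (generalize (Rmin_r (d / 2) (1 / 2)); unfold h; lra).
  assert (Hhd : Rabs h < d).
  { rewrite Rabs_pos_eq by lra. generalize (Rmin_l (d / 2) (1 / 2)) (cond_pos d). unfold h; lra. }
  specialize (Hdl h ltac:(lra) Hhd).
  rewrite Rplus_0_l, HN0, Rminus_0_r, Hlin in Hdl by lra.
  replace (c * h / h) with c in Hdl by (field; lra). lra.
Qed.

Lemma continuous_cos t : continuous cos t.
Proof. apply continuity_pt_filterlim, continuity_cos. Qed.

Lemma continuous_sin t : continuous sin t.
Proof. apply continuity_pt_filterlim, continuity_sin. Qed.

Ltac continuity_R :=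
  repeat match goal with
  | |- continuous (fun t => @?f t + @?g t) _ => apply (continuous_plus f g)
  | |- continuous (fun t => @?f t * @?g t) _ => apply (continuous_mult f g)
  | |- continuous (fun t => - @?f t) _ => apply (continuous_opp f)
  | |- continuous (fun _ => _) _ => apply continuous_const
  | |- continuous cos _ => apply continuous_cos
  | |- continuous (fun t => cos t) _ => apply continuous_cos
  | |- continuous sin _ => apply continuous_sin
  | |- continuous (fun t => sin t) _ => apply continuous_sin
  end.

Lemma continuity_2d_pt_comp (F g1 g2 : R -> R -> R) x y :
  continuity_2d_pt F (g1 x y) (g2 x y) -> continuity_2d_pt g1 x y ->
  continuity_2d_pt g2 x y ->
  continuity_2d_pt (fun u v => F (g1 u v) (g2 u v)) x y.
Proof.
  intros HF H1 H2 eps.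
  destruct (HF eps) as [d Hd].
  generalize (locally_2d_and _ _ _ _ (H1 d) (H2 d)).
  apply locally_2d_impl, locally_2d_forall.
  intros u v [Hu Hv]. exact (Hd _ _ Hu Hv).
Qed.

Lemma continuity_2d_pt_snd (w : R -> R) x y :
  continuity_pt w y -> continuity_2d_pt (fun _ v => w v) x y.
Proof.
  intro Hw. apply (continuity_1d_2d_pt_comp w (fun _ v => v)); [exact Hw|].
  apply continuity_2d_pt_id2.
Qed.

Lemma continuity_2d_pt_pow (f : R -> R -> R) n x y :
  continuity_2d_pt f x y -> continuity_2d_pt (fun u v => f u v ^ n) x y.
Proof.
  intro H. induction n as [|n IH]; simpl.
  - apply continuity_2d_pt_const.
  - apply continuity_2d_pt_mult; assumption.
Qed.

Ltac continuity_2d := repeat first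
  [ apply continuity_2d_pt_mult
  | apply continuity_2d_pt_plus
  | apply continuity_2d_pt_minus
  | apply continuity_2d_pt_opp
  | apply continuity_2d_pt_inv
  | apply continuity_2d_pt_pow
  | apply continuity_2d_pt_const
  | apply continuity_2d_pt_id1
  | apply continuity_2d_pt_id2
  | apply continuity_2d_pt_snd, continuity_cos
  | apply continuity_2d_pt_snd, continuity_sin ].

Lemma continuity_2d_pt_continuous_snd (F : R -> R -> R) x y :
  continuity_2d_pt F x y -> continuous (fun t => F x t) y.
Proof.
  intros H. apply continuity_pt_filterlim. intros eps Heps.
  destruct (H (mkposreal eps Heps)) as [d Hd].
  exists d; split; [apply cond_pos|].
  intros t [_ Ht]. apply Hd; [|exact Ht].
  rewrite Rminus_eq_0, Rabs_R0; apply cond_pos.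
Qed.

Lemma differentiable_pt_lim_of_C1 (f : R -> R -> R) x y :
  locally_2d (fun u v => ex_derive (fun t => f t v) u) x y ->
  ex_derive (fun t => f x t) y ->
  continuity_2d_pt (dx f) x y ->
  differentiable_pt_lim f x y (dx f x y) (dy f x y).
Proof.
  intros Hx Hy Cx. apply filterdiff_differentiable_pt_lim.
  eapply filterdiff_ext_lin.
  - apply (is_derive_filterdiff f x y (dx f) (dy f x y)).
    + apply locally_2d_locally in Hx.
      revert Hx. apply filter_imp. intros [u v] H. apply Derive_correct, H.
    + apply Derive_correct, Hy.
    + apply continuity_2d_pt_filterlim, Cx.
  - intros [u v]. simpl. unfold plus, scal; simpl. unfold mult; simpl. ring.
Qed.

Lemma differentiable_pt_lim_lin_comb (F G : R -> R -> R) x y a b c d k :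
  differentiable_pt_lim F x y a b -> differentiable_pt_lim G x y c d ->
  differentiable_pt_lim (fun u v => F u v * k + G u v) x y (a * k + c) (b * k + d).
Proof.
  intros HF HG. apply filterdiff_differentiable_pt_lim.
  apply filterdiff_differentiable_pt_lim in HF.
  apply filterdiff_differentiable_pt_lim in HG.
  eapply filterdiff_ext_lin.
  - apply (filterdiff_plus_fct _ _ _ _ (filterdiff_scal_l_fct k _ _ HF) HG).
  - intros [u v]. simpl. unfold plus, scal; simpl. unfold mult; simpl. ring.
Qed.

Lemma differentiable_pt_lim_const c x y : differentiable_pt_lim (fun _ _ => c) x y 0 0.
Proof.
  apply filterdiff_differentiable_pt_lim.
  eapply filterdiff_ext_lin; [apply filterdiff_const|].
  intros [u v]. simpl. unfold zero; simpl. ring.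
Qed.

(** * Integrals over a period *)

Definition period_int (F : R -> R) : R := RInt F 0 (2 * PI).

Lemma ex_period_int (F : R -> R) : (forall t, continuous F t) -> ex_RInt F 0 (2 * PI).
Proof. intros H. apply (@ex_RInt_continuous R_CompleteNormedModule). intros; apply H. Qed.

Lemma period_int_ext (F1 F2 : R -> R) :
  (forall t, F1 t = F2 t) -> period_int F1 = period_int F2.
Proof. intros H. apply RInt_ext. intros; apply H. Qed.

Lemma period_int_plus (F1 F2 : R -> R) :
  (forall t, continuous F1 t) -> (forall t, continuous F2 t) ->
  period_int (fun t => F1 t + F2 t) = period_int F1 + period_int F2.
Proof. intros H1 H2. apply (RInt_plus F1 F2); apply ex_period_int; assumption. Qed.

Lemma period_int_scal (F : R -> R) c :
  (forall t, continuous F t) -> period_int (fun t => c * F t) = c * period_int F.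
Proof. intros H. apply (RInt_scal F 0 (2 * PI) c). apply ex_period_int, H. Qed.

Lemma period_int_const c : period_int (fun _ => c) = 2 * PI * c.
Proof. unfold period_int. rewrite RInt_const. unfold scal; simpl. unfold mult; simpl. ring. Qed.

Lemma period_int_le (F1 F2 : R -> R) :
  (forall t, continuous F1 t) -> (forall t, continuous F2 t) ->
  (forall t, F1 t <= F2 t) -> period_int F1 <= period_int F2.
Proof.
  intros H1 H2 H. apply RInt_le; try (apply ex_period_int; assumption).
  - generalize PI_RGT_0; lra.
  - intros; apply H.
Qed.

Lemma period_int_derive (F dF : R -> R) :
  (forall t, is_derive F t (dF t)) -> (forall t, continuous dF t) ->
  period_int dF = F (2 * PI) - F 0.
Proof.
  intros HF HdF. apply is_RInt_unique, (is_RInt_derive F dF); intros; auto.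
Qed.

Lemma period_int_derive_periodic (F dF : R -> R) :
  (forall t, is_derive F t (dF t)) -> (forall t, continuous dF t) ->
  F (2 * PI) = F 0 -> period_int dF = 0.
Proof. intros HF HdF Hper. rewrite (period_int_derive F dF), Hper by assumption. ring. Qed.

Lemma period_int_trig a b c : period_int (fun t => a + b * cos t + c * sin t) = 2 * PI * a.
Proof.
  rewrite (period_int_derive (fun t => a * t + b * sin t - c * cos t)).
  - rewrite sin_2PI, cos_2PI, sin_0, cos_0. ring.
  - intro t. auto_derive; [exact I | ring].
  - intro t. continuity_R.
Qed.

Lemma period_int_cos_mode p q :
  period_int (fun t => (p * cos t + q * sin t) * cos t) = PI * p.
Proof.
  rewrite (period_int_derive (fun t => p * (t / 2 + sin t * cos t / 2) + q * (sin t ^ 2 / 2))).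
  - rewrite sin_2PI, cos_2PI, sin_0, cos_0. field.
  - intro t. assert (H := sin2_cos2 t). unfold Rsqr in H.
    auto_derive; [exact I|].
    replace (sin t * (1 * - sin t)) with (cos t * cos t - 1) by lra. field.
  - intro t. continuity_R.
Qed.

Lemma period_int_sin_mode p q :
  period_int (fun t => (p * cos t + q * sin t) * sin t) = PI * q.
Proof.
  rewrite (period_int_derive (fun t => p * (sin t ^ 2 / 2) + q * (t / 2 - sin t * cos t / 2))).
  - rewrite sin_2PI, cos_2PI, sin_0, cos_0. field.
  - intro t. assert (H := sin2_cos2 t). unfold Rsqr in H.
    auto_derive; [exact I|].
    replace (1 * cos t * cos t) with (1 - sin t * sin t) by lra. field.
  - intro t. continuity_R.
Qed.

Lemma is_derive_period_int_param (F F' : R -> R -> R) r :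
  (forall r t, -1 < r < 1 -> is_derive (fun r => F r t) r (F' r t)) ->
  (forall r t, -1 < r < 1 -> continuity_2d_pt F r t) ->
  (forall r t, -1 < r < 1 -> continuity_2d_pt F' r t) ->
  -1 < r < 1 ->
  is_derive (fun r => period_int (fun t => F r t)) r (period_int (fun t => F' r t)).
Proof.
  intros HD HC HC' Hr.
  assert (Hnear : locally r (fun y => -1 < y < 1)).
  { apply (open_and _ _ (open_gt (-1)) (open_lt 1)). exact Hr. }
  unfold period_int.
  rewrite (RInt_ext (fun t => F' r t) (fun t => Derive (fun u => F u t) r))
    by (intros; symmetry; apply is_derive_unique, HD, Hr).
  apply (is_derive_RInt_param F 0 (2 * PI) r).
  - revert Hnear. apply filter_imp. intros y Hy t _. eexists; apply HD, Hy.
  - intros t _. apply continuity_2d_pt_ext_loc with F'; [|apply HC', Hr].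
    destruct Hnear as [d Hd]. exists d. intros u v Hu _.
    symmetry; apply is_derive_unique, HD, Hd, Hu.
  - revert Hnear. apply filter_imp. intros y Hy.
    apply (@ex_RInt_continuous R_CompleteNormedModule). intros z _.
    apply continuity_2d_pt_continuous_snd, HC, Hy.
Qed.

(** * Laplace's equation in polar coordinates *)

Section PolarLaplace.

(* [u r t] is a function on the disc in polar coordinates; [ur], [pr], [ut] and [utt] stand for
   [d/dr u], [d/dr (r d/dr u)], [d/dt u] and [d^2/dt^2 u], so that [polar_laplace] is Laplace's
   equation multiplied by [r^2]. *)
Variables u ur pr ut utt : R -> R -> R.
Hypothesis u_dr : forall r t, -1 < r < 1 -> is_derive (fun r => u r t) r (ur r t).
Hypothesis rur_dr : forall r t, -1 < r < 1 -> is_derive (fun r => r * ur r t) r (pr r t).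
Hypothesis u_dt : forall r t, -1 < r < 1 -> is_derive (fun t => u r t) t (ut r t).
Hypothesis ut_dt : forall r t, -1 < r < 1 -> is_derive (fun t => ut r t) t (utt r t).
Hypothesis polar_laplace : forall r t, -1 < r < 1 -> r * pr r t + utt r t = 0.
Hypothesis u_cont : forall r t, -1 < r < 1 -> continuity_2d_pt u r t.
Hypothesis ur_cont : forall r t, -1 < r < 1 -> continuity_2d_pt ur r t.
Hypothesis pr_cont : forall r t, -1 < r < 1 -> continuity_2d_pt pr r t.
Hypothesis ut_cont : forall r t, -1 < r < 1 -> continuity_2d_pt ut r t.
Hypothesis utt_cont : forall r t, -1 < r < 1 -> continuity_2d_pt utt r t.
Hypothesis u_periodic : forall r, u r (2 * PI) = u r 0.
Hypothesis ut_periodic : forall r, ut r (2 * PI) = ut r 0.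
Hypothesis u_center : forall t, u 0 t = u 0 0.

Lemma continuous_at_radius (F : R -> R -> R) r t :
  (forall r t, -1 < r < 1 -> continuity_2d_pt F r t) -> -1 < r < 1 ->
  continuous (fun t => F r t) t.
Proof. intros HF Hr. apply continuity_2d_pt_continuous_snd, HF, Hr. Qed.

Lemma polar_mean_dr_eq_0 r : 0 < r < 1 -> period_int (fun t => ur r t) = 0.
Proof.
  intro Hr.
  set (P := fun r => period_int (fun t => r * ur r t)).
  assert (HP : forall x, -1 < x < 1 -> is_derive P x (period_int (fun t => pr x t))).
  { intros x Hx. apply (is_derive_period_int_param (fun r t => r * ur r t)); auto.
    intros. apply continuity_2d_pt_mult; [apply continuity_2d_pt_id1|auto]. }
  assert (HP0 : forall x, 0 < x < 1 -> period_int (fun t => pr x t) = 0).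
  { intros x Hx.
    assert (E : x * period_int (fun t => pr x t) = 0).
    { rewrite <- period_int_scal by (intro; apply continuous_at_radius; auto; lra).
      rewrite (period_int_ext _ (fun t => - utt x t))
        by (intro t; generalize (polar_laplace x t ltac:(lra)); lra).
      rewrite (period_int_ext _ (fun t => -1 * utt x t)) by (intro; ring).
      rewrite period_int_scal by (intro; apply continuous_at_radius; auto; lra).
      rewrite (period_int_derive_periodic (fun t => ut x t)); auto; try ring.
      - intro; apply ut_dt; lra.
      - intro; apply continuous_at_radius; auto; lra. }
    apply Rmult_integral in E as [E|E]; [lra|exact E]. }
  assert (E : P 0 = P r).
  { apply eq_of_is_derive_0; [lra| |].
    - intros x Hx. eapply is_derive_continuity_pt, HP; lra.
    - intros x Hx. rewrite <- (HP0 x ltac:(lra)). apply HP; lra. }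
  unfold P in E. rewrite !period_int_scal, Rmult_0_l in E
    by (intro; apply continuous_at_radius; auto; lra).
  symmetry in E.
  apply Rmult_integral in E as [E|E]; [lra|exact E].
Qed.

Lemma polar_mean r : 0 < r < 1 -> period_int (fun t => u r t) = 2 * PI * u 0 0.
Proof.
  intro Hr.
  assert (HM : forall x, -1 < x < 1 ->
    is_derive (fun r => period_int (fun t => u r t)) x (period_int (fun t => ur x t))).
  { intros x Hx. apply is_derive_period_int_param; auto. }
  rewrite <- period_int_const, (period_int_ext (fun _ => u 0 0) (fun t => u 0 t))
    by (intro; auto).
  symmetry; apply (eq_of_is_derive_0 (fun r => period_int (fun t => u r t))); [lra| |].
  - intros x Hx. eapply is_derive_continuity_pt, HM; lra.
  - intros x Hx. rewrite <- (polar_mean_dr_eq_0 x ltac:(lra)). apply HM; lra.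
Qed.

Section Mode.

Variables w w' : R -> R.
Hypothesis w_d : forall t, is_derive w t (w' t).
Hypothesis w'_d : forall t, is_derive w' t (- w t).
Hypothesis w_periodic : w (2 * PI) = w 0.
Hypothesis w'_periodic : w' (2 * PI) = w' 0.

Lemma weight_cont t : continuity_pt w t.
Proof. apply (is_derive_continuity_pt _ _ _ (w_d t)). Qed.

Lemma weight'_cont t : continuity_pt w' t.
Proof. apply (is_derive_continuity_pt _ _ _ (w'_d t)). Qed.

Lemma weighted_cont (F : R -> R -> R) (v : R -> R) :
  (forall r t, -1 < r < 1 -> continuity_2d_pt F r t) -> (forall t, continuity_pt v t) ->
  forall r t, -1 < r < 1 -> continuity_2d_pt (fun r t => F r t * v t) r t.
Proof.
  intros HF Hv r t Hr. apply continuity_2d_pt_mult; [apply HF, Hr|].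
  apply continuity_2d_pt_snd, Hv.
Qed.

Lemma continuous_weight t : continuous w t.
Proof. apply continuity_pt_filterlim, weight_cont. Qed.

Lemma continuous_weight' t : continuous w' t.
Proof. apply continuity_pt_filterlim, weight'_cont. Qed.

Lemma period_int_weight : period_int w = 0.
Proof.
  assert (H : period_int (fun t => -1 * w t) = 0).
  { apply (period_int_derive_periodic w'); [| intro t; continuity_R; apply continuous_weight
                                             | assumption].
    intro t. replace (-1 * w t) with (- w t) by ring. apply w'_d. }
  rewrite period_int_scal in H by (intro; apply continuous_weight). lra.
Qed.

Ltac continuity_at_radius Hr :=
  continuity_R;
  first [ apply continuous_weight | apply continuous_weight'
        | apply continuous_at_radius; [assumption | lra] ].

Lemma polar_mode_key r : -1 < r < 1 ->
  r * period_int (fun t => pr r t * w t) = period_int (fun t => u r t * w t).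
Proof.
  intro Hr.
  assert (I1 : period_int (fun t => utt r t * w t + ut r t * w' t) = 0).
  { apply (period_int_derive_periodic (fun t => ut r t * w t)).
    - intro t. apply (is_derive_mult (fun t => ut r t) w); [apply ut_dt, Hr | apply w_d |].
      intros; apply Rmult_comm.
    - intro t. continuity_at_radius Hr.
    - rewrite ut_periodic, w_periodic; reflexivity. }
  assert (I2 : period_int (fun t => ut r t * w' t + u r t * - w t) = 0).
  { apply (period_int_derive_periodic (fun t => u r t * w' t)).
    - intro t. apply (is_derive_mult (fun t => u r t) w'); [apply u_dt, Hr | apply w'_d |].
      intros; apply Rmult_comm.
    - intro t. continuity_at_radius Hr.
    - rewrite u_periodic, w'_periodic; reflexivity. }
  rewrite period_int_plus in I1, I2 by (intro; continuity_at_radius Hr).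
  rewrite (period_int_ext (fun t => u r t * - w t) (fun t => -1 * (u r t * w t))) in I2
    by (intro; ring).
  rewrite <- period_int_scal by (intro; continuity_at_radius Hr).
  rewrite (period_int_ext _ (fun t => -1 * (utt r t * w t)))
    by (intro t; generalize (polar_laplace r t Hr); nra).
  rewrite !period_int_scal in * by (intro; continuity_at_radius Hr).
  lra.
Qed.

Definition mode r := period_int (fun t => u r t * w t).
Definition mode_dr r := period_int (fun t => ur r t * w t).

Lemma mode_derive r : -1 < r < 1 -> is_derive mode r (mode_dr r).
Proof.
  intro Hr.
  apply (is_derive_period_int_param (fun r t => u r t * w t) (fun r t => ur r t * w t));
    auto using weighted_cont, weight_cont.
  intros; apply (is_derive_mult_const_r (fun r => u r t)), u_dr; assumption.
Qed.

(* [r * mode_dr r] has derivative [mode r / r] by [polar_mode_key], so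
   [r * (r * mode_dr r - mode r)] is constant, hence zero. *)
Lemma mode_euler r : 0 < r < 1 -> r * mode_dr r = mode r.
Proof.
  intro Hr.
  set (Q := fun r => period_int (fun t => r * ur r t * w t)).
  assert (HQ : forall x, -1 < x < 1 -> is_derive Q x (period_int (fun t => pr x t * w t))).
  { intros x Hx.
    apply (is_derive_period_int_param (fun r t => r * ur r t * w t) (fun r t => pr r t * w t));
      auto using weighted_cont, weight_cont.
    - intros; apply (is_derive_mult_const_r (fun r => r * ur r t)), rur_dr; assumption.
    - intros; apply weighted_cont; auto using weight_cont.
      intros; apply continuity_2d_pt_mult; auto using continuity_2d_pt_id1. }
  assert (HQN : forall x, -1 < x < 1 -> Q x = x * mode_dr x).
  { intros x Hx. unfold Q, mode_dr. rewrite <- period_int_scal by (intro; continuity_at_radius Hx).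
    apply period_int_ext; intro; ring. }
  assert (HPhi : forall y, -1 < y < 1 -> is_derive (fun r => r * (Q r - mode r)) y 0).
  { intros y Hy.
    replace 0 with (1 * (Q y - mode y) + y * (period_int (fun t => pr y t * w t) - mode_dr y)).
    - apply (is_derive_mult (fun r => r) (fun r => Q r - mode r));
        [apply (is_derive_id (K := R_AbsRing)) | apply (is_derive_minus Q mode) |].
      + apply HQ, Hy.
      + apply mode_derive, Hy.
      + intros; apply Rmult_comm.
    - rewrite (Rmult_minus_distr_l y), polar_mode_key, HQN by assumption. unfold mode; ring. }
  assert (E : 0 * (Q 0 - mode 0) = r * (Q r - mode r)).
  { apply (eq_of_is_derive_0 (fun r => r * (Q r - mode r))); [lra| |].
    - intros y Hy. apply (is_derive_continuity_pt _ _ _ (HPhi y ltac:(lra))).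
    - intros y Hy. apply HPhi; lra. }
  rewrite Rmult_0_l in E. symmetry in E.
  apply Rmult_integral in E as [E|E]; [lra|]. rewrite <- HQN; lra.
Qed.

Lemma polar_mode r : 0 < r < 1 -> mode r = r * mode_dr 0.
Proof.
  intro Hr.
  assert (H0 : mode 0 = 0).
  { unfold mode. rewrite (period_int_ext _ (fun t => u 0 0 * w t)) by (intro; rewrite u_center; ring).
    rewrite period_int_scal, period_int_weight by (intro; apply continuous_weight). ring. }
  assert (Hlin : forall x, 0 < x < 1 -> mode x = mode r / r * x).
  { intros x Hx.
    assert (E : mode x / x = mode r / r).
    { apply (eq_of_is_derive_0_open (fun y => mode y / y) 0 1); [|assumption..].
      intros y Hy.
      replace 0 with ((mode_dr y * y - mode y * 1) / y ^ 2)
        by (rewrite Rmult_1_r, Rmult_comm, mode_euler by lra; field; lra).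
      apply (is_derive_div mode (fun y => y));
        [apply mode_derive; lra | apply (is_derive_id (K := R_AbsRing)) | lra]. }
    rewrite <- E. field. lra. }
  rewrite <- (is_derive_0_of_linear_right mode (mode r / r) (mode_dr 0) H0
                (mode_derive 0 ltac:(lra)) Hlin).
  field. lra.
Qed.

End Mode.
End PolarLaplace.

(** * Harmonic functions pulled back by automorphisms of the disc *)

Definition cmul_re (a b c d : R) : R := a * c - b * d.
Definition cmul_im (a b c d : R) : R := a * d + b * c.

Section Mobius.

Variables zx zy : R.
Hypothesis Hz : zx ^ 2 + zy ^ 2 < 1.

(* With [z = zx + i zy], [zeta = r e^(it)] and [D = 1 + conj z zeta = den_re + i den_im],
   [mob_re + i mob_im] is the automorphism [(zeta + z) / D] of the disc sending [0] to [z],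
   [mob_dr_re + i mob_dr_im = (1 - |z|^2) e^(it) / D^2] is its [r]-derivative and
   [rmob_dr_re + i rmob_dr_im = (1 - |z|^2) e^(it) (2 - D) conj(D)^3 / |D|^6] is the
   [r]-derivative of [r] times the latter; by holomorphy, [d/dt = i r d/dr] on all of them. *)
Definition mob_scale := 1 - zx ^ 2 - zy ^ 2.
Definition den_re r t := 1 + zx * (r * cos t) + zy * (r * sin t).
Definition den_im r t := zx * (r * sin t) - zy * (r * cos t).
Definition den_sq r t := den_re r t ^ 2 + den_im r t ^ 2.
Definition mob_re r t :=
  ((r * cos t + zx) * den_re r t + (r * sin t + zy) * den_im r t) / den_sq r t.
Definition mob_im r t :=
  ((r * sin t + zy) * den_re r t - (r * cos t + zx) * den_im r t) / den_sq r t.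
Definition mob_dr_re r t := mob_scale *
  (cos t * (den_re r t ^ 2 - den_im r t ^ 2) + 2 * sin t * den_re r t * den_im r t) /
  den_sq r t ^ 2.
Definition mob_dr_im r t := mob_scale *
  (sin t * (den_re r t ^ 2 - den_im r t ^ 2) - 2 * cos t * den_re r t * den_im r t) /
  den_sq r t ^ 2.
Definition num_re r t := cmul_re (cos t) (sin t) (2 - den_re r t) (- den_im r t).
Definition num_im r t := cmul_im (cos t) (sin t) (2 - den_re r t) (- den_im r t).
Definition den_conj_cube_re r t := den_re r t ^ 3 - 3 * den_re r t * den_im r t ^ 2.
Definition den_conj_cube_im r t := den_im r t ^ 3 - 3 * den_re r t ^ 2 * den_im r t.
Definition rmob_dr_re r t := mob_scale *
  cmul_re (num_re r t) (num_im r t) (den_conj_cube_re r t) (den_conj_cube_im r t) /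
  den_sq r t ^ 3.
Definition rmob_dr_im r t := mob_scale *
  cmul_im (num_re r t) (num_im r t) (den_conj_cube_re r t) (den_conj_cube_im r t) /
  den_sq r t ^ 3.

Lemma den_sq_eq r t :
  den_sq r t = (r * cos t + zx) ^ 2 + (r * sin t + zy) ^ 2 + mob_scale * (1 - r ^ 2).
Proof.
  assert (H := sin2_cos2 t). unfold Rsqr in H.
  unfold den_sq, den_re, den_im, mob_scale.
  replace (r ^ 2) with (r ^ 2 * (sin t * sin t + cos t * cos t)) by (rewrite H; ring).
  ring.
Qed.

Lemma den_sq_pos r t : -1 < r < 1 -> 0 < den_sq r t.
Proof.
  intros Hr. rewrite den_sq_eq. unfold mob_scale.
  assert (0 < (1 - zx ^ 2 - zy ^ 2) * (1 - r ^ 2)) by (apply Rmult_lt_0_compat; nra).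
  generalize (pow2_ge_0 (r * cos t + zx)) (pow2_ge_0 (r * sin t + zy)). lra.
Qed.

Lemma den_sq_pow_neq_0 r t n : -1 < r < 1 -> den_sq r t ^ n <> 0.
Proof. intro Hr. apply pow_nonzero. generalize (den_sq_pos r t Hr); lra. Qed.

Lemma mob_in_disc r t : -1 < r < 1 -> in_disc (mob_re r t) (mob_im r t).
Proof.
  intros Hr. assert (HD := den_sq_pos r t Hr). unfold in_disc.
  replace (mob_re r t ^ 2 + mob_im r t ^ 2)
    with (((r * cos t + zx) ^ 2 + (r * sin t + zy) ^ 2) / den_sq r t)
    by (unfold mob_re, mob_im; unfold den_sq in *; field; lra).
  apply Rmult_lt_reg_r with (den_sq r t); [lra|].
  unfold Rdiv. rewrite Rmult_assoc, Rinv_l, Rmult_1_r, Rmult_1_l, den_sq_eq by lra.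
  unfold mob_scale. assert (0 < (1 - zx ^ 2 - zy ^ 2) * (1 - r ^ 2)) by (apply Rmult_lt_0_compat; nra).
  lra.
Qed.

Ltac den_neq_0 := let H := fresh in intro H;
  repeat (rewrite Rmult_1_r in H);
  repeat (apply Rmult_integral in H; destruct H as [H|H]); nra.

Ltac mobius_derive r t Hr :=
  generalize (den_sq_pos r t Hr); intro;
  unfold mob_re, mob_im, mob_dr_re, mob_dr_im, rmob_dr_re, rmob_dr_im, num_re, num_im,
    den_conj_cube_re, den_conj_cube_im, cmul_re, cmul_im, den_sq, den_re, den_im,
    mob_scale in *;
  auto_derive; [den_neq_0 | field; lra].

Lemma mob_re_dr r t : -1 < r < 1 -> is_derive (fun r => mob_re r t) r (mob_dr_re r t).
Proof. intro Hr. mobius_derive r t Hr. Qed.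
Lemma mob_im_dr r t : -1 < r < 1 -> is_derive (fun r => mob_im r t) r (mob_dr_im r t).
Proof. intro Hr. mobius_derive r t Hr. Qed.
Lemma mob_re_dt r t : -1 < r < 1 -> is_derive (fun t => mob_re r t) t (- (r * mob_dr_im r t)).
Proof. intro Hr. mobius_derive r t Hr. Qed.
Lemma mob_im_dt r t : -1 < r < 1 -> is_derive (fun t => mob_im r t) t (r * mob_dr_re r t).
Proof. intro Hr. mobius_derive r t Hr. Qed.
Lemma rmob_re_dr r t :
  -1 < r < 1 -> is_derive (fun r => r * mob_dr_re r t) r (rmob_dr_re r t).
Proof. intro Hr. mobius_derive r t Hr. Qed.
Lemma rmob_im_dr r t :
  -1 < r < 1 -> is_derive (fun r => r * mob_dr_im r t) r (rmob_dr_im r t).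
Proof. intro Hr. mobius_derive r t Hr. Qed.
Lemma rmob_re_dt r t :
  -1 < r < 1 -> is_derive (fun t => r * mob_dr_re r t) t (- (r * rmob_dr_im r t)).
Proof. intro Hr. mobius_derive r t Hr. Qed.
Lemma rmob_im_dt r t :
  -1 < r < 1 -> is_derive (fun t => r * mob_dr_im r t) t (r * rmob_dr_re r t).
Proof. intro Hr. mobius_derive r t Hr. Qed.

Ltac mobius_continuity Hr :=
  unfold mob_re, mob_im, mob_dr_re, mob_dr_im, rmob_dr_re, rmob_dr_im, num_re, num_im,
    den_conj_cube_re, den_conj_cube_im, cmul_re, cmul_im, Rdiv;
  continuity_2d;
  first [apply den_sq_pow_neq_0, Hr | apply Rgt_not_eq, den_sq_pos, Hr].

Lemma mob_re_cont r t : -1 < r < 1 -> continuity_2d_pt mob_re r t.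
Proof. intro Hr. mobius_continuity Hr. Qed.
Lemma mob_im_cont r t : -1 < r < 1 -> continuity_2d_pt mob_im r t.
Proof. intro Hr. mobius_continuity Hr. Qed.

End Mobius.

Definition harmonic_with_partials (G Gx Gy Gxx Gxy Gyx Gyy : R -> R -> R) : Prop :=
  forall x y, in_disc x y ->
    differentiable_pt_lim G x y (Gx x y) (Gy x y) /\
    differentiable_pt_lim Gx x y (Gxx x y) (Gxy x y) /\
    differentiable_pt_lim Gy x y (Gyx x y) (Gyy x y) /\
    continuity_2d_pt Gxx x y /\ continuity_2d_pt Gxy x y /\
    continuity_2d_pt Gyx x y /\ continuity_2d_pt Gyy x y /\
    Gxx x y + Gyy x y = 0.

Definition mob_pull (zx zy : R) (H : R -> R -> R) (r t : R) : R :=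
  H (mob_re zx zy r t) (mob_im zx zy r t).

Section HarmonicPullback.

Variables zx zy : R.
Hypothesis Hz : zx ^ 2 + zy ^ 2 < 1.

Lemma is_derive_pull_r (H Hx Hy : R -> R -> R) r t :
  (forall x y, in_disc x y -> differentiable_pt_lim H x y (Hx x y) (Hy x y)) -> -1 < r < 1 ->
  is_derive (fun r => mob_pull zx zy H r t) r
    (mob_pull zx zy Hx r t * mob_dr_re zx zy r t + mob_pull zx zy Hy r t * mob_dr_im zx zy r t).
Proof.
  intros HH Hr. unfold mob_pull. apply is_derive_Reals, derivable_pt_lim_comp_2d.
  - apply HH, mob_in_disc; assumption.
  - apply is_derive_Reals, mob_re_dr; assumption.
  - apply is_derive_Reals, mob_im_dr; assumption.
Qed.

Lemma is_derive_pull_t (H Hx Hy : R -> R -> R) r t :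
  (forall x y, in_disc x y -> differentiable_pt_lim H x y (Hx x y) (Hy x y)) -> -1 < r < 1 ->
  is_derive (fun t => mob_pull zx zy H r t) t
    (mob_pull zx zy Hx r t * - (r * mob_dr_im zx zy r t) +
     mob_pull zx zy Hy r t * (r * mob_dr_re zx zy r t)).
Proof.
  intros HH Hr. unfold mob_pull. apply is_derive_Reals, derivable_pt_lim_comp_2d.
  - apply HH, mob_in_disc; assumption.
  - apply is_derive_Reals, mob_re_dt; assumption.
  - apply is_derive_Reals, mob_im_dt; assumption.
Qed.

Lemma continuity_2d_pt_pull (H : R -> R -> R) r t :
  (forall x y, in_disc x y -> continuity_2d_pt H x y) -> -1 < r < 1 ->
  continuity_2d_pt (mob_pull zx zy H) r t.
Proof.
  intros HH Hr. unfold mob_pull. apply continuity_2d_pt_comp.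
  - apply HH, mob_in_disc; assumption.
  - apply mob_re_cont; assumption.
  - apply mob_im_cont; assumption.
Qed.

Variables G Gx Gy Gxx Gxy Gyx Gyy : R -> R -> R.
Hypothesis HG : harmonic_with_partials G Gx Gy Gxx Gxy Gyx Gyy.

Local Notation A1 := (mob_dr_re zx zy).
Local Notation A2 := (mob_dr_im zx zy).
Local Notation E1 := (rmob_dr_re zx zy).
Local Notation E2 := (rmob_dr_im zx zy).
Local Notation pG := (mob_pull zx zy G).
Local Notation pGx := (mob_pull zx zy Gx).
Local Notation pGy := (mob_pull zx zy Gy).

(* The derivatives called [ur], [ut], [pr] and [utt] in [PolarLaplace], for [u = pG]. *)
Definition pull_r r t := pGx r t * A1 r t + pGy r t * A2 r t.
Definition pull_t r t := pGx r t * - (r * A2 r t) + pGy r t * (r * A1 r t).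
Definition pull_rr r t :=
  (mob_pull zx zy Gxx r t * A1 r t + mob_pull zx zy Gxy r t * A2 r t) * (r * A1 r t) + pGx r t * E1 r t +
  ((mob_pull zx zy Gyx r t * A1 r t + mob_pull zx zy Gyy r t * A2 r t) * (r * A2 r t) + pGy r t * E2 r t).
Definition pull_tt r t :=
  (mob_pull zx zy Gxx r t * - (r * A2 r t) + mob_pull zx zy Gxy r t * (r * A1 r t)) * - (r * A2 r t) +
  pGx r t * - (r * E1 r t) +
  ((mob_pull zx zy Gyx r t * - (r * A2 r t) + mob_pull zx zy Gyy r t * (r * A1 r t)) * (r * A1 r t) +
   pGy r t * - (r * E2 r t)).

Lemma harmonic_diff x y : in_disc x y -> differentiable_pt_lim G x y (Gx x y) (Gy x y).
Proof. intro H; apply (HG x y H). Qed.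
Lemma harmonic_diff_x x y : in_disc x y -> differentiable_pt_lim Gx x y (Gxx x y) (Gxy x y).
Proof. intro H; apply (HG x y H). Qed.
Lemma harmonic_diff_y x y : in_disc x y -> differentiable_pt_lim Gy x y (Gyx x y) (Gyy x y).
Proof. intro H; apply (HG x y H). Qed.

Lemma harmonic_partials_cont x y : in_disc x y ->
  continuity_2d_pt G x y /\ continuity_2d_pt Gx x y /\ continuity_2d_pt Gy x y /\
  continuity_2d_pt Gxx x y /\ continuity_2d_pt Gxy x y /\
  continuity_2d_pt Gyx x y /\ continuity_2d_pt Gyy x y.
Proof.
  intro H. destruct (HG x y H) as (D & Dx & Dy & Cxx & Cxy & Cyx & Cyy & _).
  repeat split; try assumption; apply differentiable_continuity_pt; do 2 eexists; eassumption.
Qed.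

Ltac pull_continuity Hr :=
  unfold pull_r, pull_rr, pull_t, pull_tt;
  continuity_2d;
  first [ apply continuity_2d_pt_pull; [intros x y Hxy; generalize (harmonic_partials_cont x y Hxy); tauto
                           | exact Hr]
        | apply den_sq_pow_neq_0; assumption
        | apply Rgt_not_eq, den_sq_pos; assumption ].

Lemma pullG_cont r t : -1 < r < 1 -> continuity_2d_pt pG r t.
Proof. intro Hr. pull_continuity Hr. Qed.
Lemma pull_r_cont r t : -1 < r < 1 -> continuity_2d_pt pull_r r t.
Proof. intro Hr. pull_continuity Hr. Qed.
Lemma pull_rr_cont r t : -1 < r < 1 -> continuity_2d_pt pull_rr r t.
Proof. intro Hr. pull_continuity Hr. Qed.
Lemma pull_t_cont r t : -1 < r < 1 -> continuity_2d_pt pull_t r t.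
Proof. intro Hr. pull_continuity Hr. Qed.
Lemma pull_tt_cont r t : -1 < r < 1 -> continuity_2d_pt pull_tt r t.
Proof. intro Hr. pull_continuity Hr. Qed.

Lemma pullG_dr r t : -1 < r < 1 -> is_derive (fun r => pG r t) r (pull_r r t).
Proof. intro Hr. apply is_derive_pull_r; [exact harmonic_diff | exact Hr]. Qed.

Lemma pullG_dt r t : -1 < r < 1 -> is_derive (fun t => pG r t) t (pull_t r t).
Proof. intro Hr. apply is_derive_pull_t; [exact harmonic_diff | exact Hr]. Qed.

Lemma r_pull_r_dr r t : -1 < r < 1 -> is_derive (fun r => r * pull_r r t) r (pull_rr r t).
Proof.
  intro Hr.
  apply (is_derive_ext_R (fun r => pGx r t * (r * A1 r t) + pGy r t * (r * A2 r t)));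
    [intro; unfold pull_r; ring|].
  eapply is_derive_eq; [apply is_derive_Rplus; apply is_derive_Rmult|].
  - apply is_derive_pull_r; [exact harmonic_diff_x | exact Hr].
  - apply rmob_re_dr; assumption.
  - apply is_derive_pull_r; [exact harmonic_diff_y | exact Hr].
  - apply rmob_im_dr; assumption.
  - unfold pull_rr; ring.
Qed.

Lemma pull_t_dt r t : -1 < r < 1 -> is_derive (fun t => pull_t r t) t (pull_tt r t).
Proof.
  intro Hr. unfold pull_t.
  eapply is_derive_eq; [apply is_derive_Rplus; apply is_derive_Rmult|].
  - apply is_derive_pull_t; [exact harmonic_diff_x | exact Hr].
  - apply (is_derive_opp (fun t => r * A2 r t)), rmob_im_dt; assumption.
  - apply is_derive_pull_t; [exact harmonic_diff_y | exact Hr].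
  - apply rmob_re_dt; assumption.
  - unfold pull_tt, opp; simpl. ring.
Qed.

Lemma pull_polar_laplace r t : -1 < r < 1 -> r * pull_rr r t + pull_tt r t = 0.
Proof.
  intro Hr. destruct (HG _ _ (mob_in_disc _ _ Hz r t Hr)) as (_ & _ & _ & _ & _ & _ & _ & L).
  unfold pull_rr, pull_tt, mob_pull.
  replace (Gyy (mob_re zx zy r t) (mob_im zx zy r t))
    with (- Gxx (mob_re zx zy r t) (mob_im zx zy r t)) by lra.
  ring.
Qed.

Ltac unfold_pull :=
  unfold pull_t, mob_pull, mob_re, mob_im, mob_dr_re, mob_dr_im,
    den_sq, den_re, den_im.

Lemma pullG_periodic r : pG r (2 * PI) = pG r 0.
Proof. unfold_pull. rewrite cos_2PI, sin_2PI, cos_0, sin_0. reflexivity. Qed.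

Lemma pull_t_periodic r : pull_t r (2 * PI) = pull_t r 0.
Proof. unfold_pull. rewrite cos_2PI, sin_2PI, cos_0, sin_0. reflexivity. Qed.

Lemma pull_center (H : R -> R -> R) t : mob_pull zx zy H 0 t = H zx zy.
Proof.
  unfold mob_pull, mob_re, mob_im, den_sq, den_re, den_im. f_equal; field_simplify_eq; ring.
Qed.

Lemma pull_r_center t : pull_r 0 t = mob_scale zx zy * (Gx zx zy * cos t + Gy zx zy * sin t).
Proof.
  unfold pull_r. rewrite !pull_center.
  unfold mob_dr_re, mob_dr_im, den_sq, den_re, den_im. field_simplify_eq; ring.
Qed.

Lemma harmonic_pull_mean r : 0 < r < 1 -> period_int (fun t => pG r t) = 2 * PI * G zx zy.
Proof.
  intro Hr. rewrite <- (pull_center G 0).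
  apply (polar_mean pG pull_r pull_rr pull_t pull_tt);
    auto using pullG_dr, r_pull_r_dr, pullG_dt, pull_t_dt, pull_polar_laplace, pullG_cont, pull_r_cont,
      pull_rr_cont, pull_t_cont, pull_tt_cont, pullG_periodic, pull_t_periodic.
  intro; rewrite !pull_center; reflexivity.
Qed.


Lemma harmonic_pull_mode (w w' : R -> R) r :
  (forall t, is_derive w t (w' t)) -> (forall t, is_derive w' t (- w t)) ->
  w (2 * PI) = w 0 -> w' (2 * PI) = w' 0 -> 0 < r < 1 ->
  period_int (fun t => pG r t * w t) = r * period_int (fun t => pull_r 0 t * w t).
Proof.
  intros. change (mode pG w r = r * mode_dr pull_r w 0).
  apply (polar_mode pG pull_r pull_rr pull_t pull_tt) with (w' := w');
    auto using pullG_dr, r_pull_r_dr, pullG_dt, pull_t_dt, pull_polar_laplace, pullG_cont, pull_r_cont,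
      pull_rr_cont, pull_t_cont, pull_tt_cont, pullG_periodic, pull_t_periodic.
  intro; rewrite !pull_center; reflexivity.
Qed.

Lemma harmonic_pull_cos r : 0 < r < 1 ->
  period_int (fun t => pG r t * cos t) = r * (PI * (mob_scale zx zy * Gx zx zy)).
Proof.
  intro Hr. rewrite (harmonic_pull_mode cos (fun t => - sin t)).
  - rewrite <- (period_int_cos_mode (mob_scale zx zy * Gx zx zy) (mob_scale zx zy * Gy zx zy)).
    f_equal. apply period_int_ext. intro. rewrite pull_r_center. ring.
  - intro. auto_derive; [exact I | ring].
  - intro. auto_derive; [exact I | ring].
  - rewrite cos_2PI, cos_0; reflexivity.
  - rewrite sin_2PI, sin_0; reflexivity.
  - exact Hr.
Qed.

Lemma harmonic_pull_sin r : 0 < r < 1 ->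
  period_int (fun t => pG r t * sin t) = r * (PI * (mob_scale zx zy * Gy zx zy)).
Proof.
  intro Hr. rewrite (harmonic_pull_mode sin cos).
  - rewrite <- (period_int_sin_mode (mob_scale zx zy * Gx zx zy) (mob_scale zx zy * Gy zx zy)).
    f_equal. apply period_int_ext. intro. rewrite pull_r_center. ring.
  - intro. auto_derive; [exact I | ring].
  - intro. auto_derive; [exact I | ring].
  - rewrite sin_2PI, sin_0; reflexivity.
  - rewrite cos_2PI, cos_0; reflexivity.
  - exact Hr.
Qed.

Lemma harmonic_pull_trig r a b c : 0 < r < 1 ->
  period_int (fun t => pG r t * (a + b * cos t + c * sin t)) =
  2 * PI * a * G zx zy + PI * r * mob_scale zx zy * (b * Gx zx zy + c * Gy zx zy).
Proof.
  intro Hr.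
  assert (HpG : forall t, continuous (fun t => pG r t) t)
    by (intro; apply continuity_2d_pt_continuous_snd, pullG_cont; lra).
  rewrite (period_int_ext _ (fun t => a * pG r t + b * (pG r t * cos t) + c * (pG r t * sin t)))
    by (intro; ring).
  rewrite !period_int_plus, !period_int_scal;
    try (intro; continuity_R; apply HpG).
  rewrite harmonic_pull_mean, harmonic_pull_cos, harmonic_pull_sin by assumption.
  ring.
Qed.

End HarmonicPullback.

(** * Euclidean space *)

Definition sum_over (l : list nat) (F : nat -> R) : R := fold_right Rplus 0 (map F l).

Lemma sum_over_plus l F1 F2 : sum_over l (fun i => F1 i + F2 i) = sum_over l F1 + sum_over l F2.
Proof. induction l as [|i l IH]; unfold sum_over in *; simpl; [ring|]. rewrite IH; ring. Qed.

Lemma sum_over_scal l F c : sum_over l (fun i => c * F i) = c * sum_over l F.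
Proof. induction l as [|i l IH]; unfold sum_over in *; simpl; [ring|]. rewrite IH; ring. Qed.

Lemma sum_over_ext l F1 F2 : (forall i, F1 i = F2 i) -> sum_over l F1 = sum_over l F2.
Proof. intro H. unfold sum_over. f_equal. apply map_ext, H. Qed.

Lemma sum_over_nonneg l F : (forall i, 0 <= F i) -> 0 <= sum_over l F.
Proof.
  intro H. induction l as [|i l IH]; unfold sum_over in *; simpl; [lra|]. generalize (H i). lra.
Qed.

Lemma dotn_sum_over n u v : dotn n u v = sum_over (seq 0 n) (fun i => u i * v i).
Proof. reflexivity. Qed.

Lemma dotn_comm n u v : dotn n u v = dotn n v u.
Proof. rewrite !dotn_sum_over. apply sum_over_ext. intros; ring. Qed.

Lemma dotn_linear_l n a b u w v :
  dotn n (fun i => a * u i + b * w i) v = a * dotn n u v + b * dotn n w v.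
Proof.
  rewrite !dotn_sum_over, <- !sum_over_scal, <- sum_over_plus.
  apply sum_over_ext. intros; ring.
Qed.

Lemma dotn_linear_r n a b u w v :
  dotn n v (fun i => a * u i + b * w i) = a * dotn n v u + b * dotn n v w.
Proof. rewrite dotn_comm, dotn_linear_l, (dotn_comm n u), (dotn_comm n w). reflexivity. Qed.

Lemma dotn_self_nonneg n u : 0 <= dotn n u u.
Proof. apply sum_over_nonneg. intros; nra. Qed.

Lemma dotn_comb3 n a b c u v w :
  dotn n (fun i => a * u i + b * v i + c * w i) (fun i => a * u i + b * v i + c * w i) =
  a ^ 2 * dotn n u u + b ^ 2 * dotn n v v + c ^ 2 * dotn n w w +
  2 * a * b * dotn n u v + 2 * a * c * dotn n u w + 2 * b * c * dotn n v w.
Proof.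
  rewrite !dotn_sum_over, <- !sum_over_scal, <- !sum_over_plus.
  apply sum_over_ext. intros; ring.
Qed.

Lemma dotn_cauchy_schwarz n u v : dotn n u v ^ 2 <= dotn n u u * dotn n v v.
Proof.
  assert (H : forall t, 0 <= dotn n u u - 2 * t * dotn n u v + t ^ 2 * dotn n v v).
  { intro t. generalize (dotn_self_nonneg n (fun i => 1 * u i + (- t) * v i + 0 * v i)).
    rewrite dotn_comb3. nra. }
  assert (Hu := dotn_self_nonneg n u). assert (Hv := dotn_self_nonneg n v).
  destruct (Req_dec (dotn n v v) 0) as [E|E].
  - rewrite E in H |- *.
    destruct (Req_dec (dotn n u v) 0) as [E2|E2]; [rewrite E2; lra|exfalso].
    specialize (H ((dotn n u u + 1) / dotn n u v)).
    replace (dotn n u u - 2 * ((dotn n u u + 1) / dotn n u v) * dotn n u v +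
             ((dotn n u u + 1) / dotn n u v) ^ 2 * 0) with (- dotn n u u - 2) in H
      by (field; assumption).
    lra.
  - specialize (H (dotn n u v / dotn n v v)).
    replace (dotn n u u - 2 * (dotn n u v / dotn n v v) * dotn n u v +
             (dotn n u v / dotn n v v) ^ 2 * dotn n v v)
      with ((dotn n u u * dotn n v v - dotn n u v ^ 2) / dotn n v v) in H by (field; lra).
    apply Rmult_le_compat_r with (r := dotn n v v) in H; [|lra].
    unfold Rdiv in H. rewrite Rmult_0_l, Rmult_assoc, Rinv_l, Rmult_1_r in H by lra.
    lra.
Qed.

Lemma dotn_unit_le n u e : dotn n e e = 1 -> dotn n u e ^ 2 <= dotn n u u.
Proof. intro He. generalize (dotn_cauchy_schwarz n u e). rewrite He. lra. Qed.

Lemma dotn_bessel2 n u e nu :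
  dotn n e e = 1 -> dotn n nu nu = 1 -> dotn n e nu = 0 ->
  dotn n u e ^ 2 + dotn n u nu ^ 2 <= dotn n u u.
Proof.
  intros He Hnu Henu.
  generalize (dotn_self_nonneg n (fun i => 1 * u i + (- dotn n u e) * e i + (- dotn n u nu) * nu i)).
  rewrite dotn_comb3, He, Hnu, Henu. nra.
Qed.

Lemma normn_sq n u : normn n u ^ 2 = dotn n u u.
Proof. unfold normn. rewrite <- Rsqr_pow2. apply Rsqr_sqrt, dotn_self_nonneg. Qed.

Lemma in_ball_dotn n u : in_ball n u -> dotn n u u < 1.
Proof.
  unfold in_ball. intro H. rewrite <- normn_sq. generalize (sqrt_pos (dotn n u u)).
  unfold normn in *. nra.
Qed.

Lemma harmonic_with_partials_of_C2 g :
  (forall x y, in_disc x y -> C2_at g x y /\ dx (dx g) x y + dy (dy g) x y = 0) ->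
  harmonic_with_partials g (dx g) (dy g) (dx (dx g)) (dy (dx g)) (dx (dy g)) (dy (dy g)).
Proof.
  intros H x y Hxy. destruct (H x y Hxy) as [[He (_ & Cx & _ & Cxx & Cyx & Cxy & Cyy)] L].
  assert (Hloc : locally_2d (fun u v =>
     ex_derive (fun t => g t v) u /\ ex_derive (fun t => g u t) v /\
     ex_derive (fun t => dx g t v) u /\ ex_derive (fun t => dx g u t) v /\
     ex_derive (fun t => dy g t v) u /\ ex_derive (fun t => dy g u t) v) x y)
    by (destruct He as [e He]; exists e; exact He).
  destruct (locally_2d_singleton _ _ _ Hloc) as (_ & Dy & _ & Dxy & _ & Dyy).
  repeat split; try assumption; apply differentiable_pt_lim_of_C1; try assumption;
    revert Hloc; apply locally_2d_impl, locally_2d_forall; tauto.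
Qed.

Definition lin_comb (l : list nat) (F : nat -> R -> R -> R) (v : nat -> R) (x y : R) : R :=
  sum_over l (fun i => F i x y * v i).

Lemma harmonic_lin_comb l F Fx Fy Fxx Fxy Fyx Fyy v :
  (forall i, In i l -> harmonic_with_partials (F i) (Fx i) (Fy i) (Fxx i) (Fxy i) (Fyx i) (Fyy i)) ->
  harmonic_with_partials (lin_comb l F v) (lin_comb l Fx v) (lin_comb l Fy v)
    (lin_comb l Fxx v) (lin_comb l Fxy v) (lin_comb l Fyx v) (lin_comb l Fyy v).
Proof.
  induction l as [|i l IH]; intros H x y Hxy; unfold lin_comb, sum_over in *; simpl.
  - repeat split; try apply differentiable_pt_lim_const; try apply continuity_2d_pt_const. ring.
  - destruct (H i (or_introl eq_refl) x y Hxy) as (D & Dx & Dy & Cxx & Cxy & Cyx & Cyy & L).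
    destruct (IH (fun j Hj => H j (or_intror Hj)) x y Hxy)
      as (D' & Dx' & Dy' & Cxx' & Cxy' & Cyx' & Cyy' & L').
    repeat split;
      try (apply differentiable_pt_lim_lin_comb; assumption);
      try (apply continuity_2d_pt_plus; [apply continuity_2d_pt_mult|];
           auto using continuity_2d_pt_const).
    replace (Fxx i x y * v i + fold_right Rplus 0 (map (fun j => Fxx j x y * v j) l) +
             (Fyy i x y * v i + fold_right Rplus 0 (map (fun j => Fyy j x y * v j) l)))
      with ((Fxx i x y + Fyy i x y) * v i +
            (fold_right Rplus 0 (map (fun j => Fxx j x y * v j) l) +
             fold_right Rplus 0 (map (fun j => Fyy j x y * v j) l))) by ring.
    rewrite L, L'. ring.
Qed.

Lemma harmonic_dotn n f e : harmonic_on_disc n f ->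
  harmonic_with_partials (fun x y => dotn n (fpt f x y) e)
    (fun x y => dotn n (fx f x y) e) (fun x y => dotn n (fy f x y) e)
    (fun x y => dotn n (fun i => dx (dx (f i)) x y) e)
    (fun x y => dotn n (fun i => dy (dx (f i)) x y) e)
    (fun x y => dotn n (fun i => dx (dy (f i)) x y) e)
    (fun x y => dotn n (fun i => dy (dy (f i)) x y) e).
Proof.
  intro Hf. apply (harmonic_lin_comb (seq 0 n) f). intros i Hi.
  apply harmonic_with_partials_of_C2. intros x y Hxy.
  apply in_seq in Hi. apply Hf; [lia | exact Hxy].
Qed.

Lemma dotn_unit_le_normn n u e : dotn n e e = 1 -> Rabs (dotn n u e) <= normn n u.
Proof.
  intro He. unfold normn. rewrite <- sqrt_Rsqr_abs. apply sqrt_le_1_alt.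
  rewrite Rsqr_pow2. apply dotn_unit_le, He.
Qed.

Lemma dotn_scal_l n c u v : dotn n (fun i => c * u i) v = c * dotn n u v.
Proof. rewrite !dotn_sum_over, <- sum_over_scal. apply sum_over_ext. intros; ring. Qed.

Lemma dotn_unit_direction n u :
  0 < normn n u -> exists e, dotn n e e = 1 /\ dotn n u e = normn n u.
Proof.
  intro Hu. exists (fun i => / normn n u * u i).
  assert (Hsq := normn_sq n u).
  split.
  - rewrite dotn_scal_l, dotn_comm, dotn_scal_l, <- Hsq. field. lra.
  - rewrite dotn_comm, dotn_scal_l, <- Hsq. field. lra.
Qed.

(** * The Schwarz-Pick estimate *)

(* The vector [(2 s + (1 + s^2) C, (1 - s^2) S)] has length [1 + s^2 + 2 s C]. *)
Lemma disc_pairing_bound s C S b1 b2 :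
  s ^ 2 < 1 -> C ^ 2 + S ^ 2 = 1 -> b1 ^ 2 + b2 ^ 2 <= 1 ->
  (2 * s + (1 + s ^ 2) * C) * b1 + (1 - s ^ 2) * S * b2 <= 1 + s ^ 2 + 2 * s * C.
Proof.
  intros Hs HCS Hb.
  assert (HL : 0 <= 1 + s ^ 2 + 2 * s * C) by (generalize (pow2_ge_0 (s + C)); nra).
  assert (HAB : (2 * s + (1 + s ^ 2) * C) ^ 2 + ((1 - s ^ 2) * S) ^ 2 = (1 + s ^ 2 + 2 * s * C) ^ 2).
  { replace (((1 - s ^ 2) * S) ^ 2) with ((1 - s ^ 2) ^ 2 * S ^ 2) by ring.
    replace (S ^ 2) with (1 - C ^ 2) by lra. ring. }
  set (A := 2 * s + (1 + s ^ 2) * C) in *. set (B := (1 - s ^ 2) * S) in *.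
  assert (HCS2 : (A * b1 + B * b2) ^ 2 <= (A ^ 2 + B ^ 2) * (b1 ^ 2 + b2 ^ 2))
    by (generalize (pow2_ge_0 (A * b2 - B * b1)); nra).
  assert (HAB1 : (A ^ 2 + B ^ 2) * (b1 ^ 2 + b2 ^ 2) <= A ^ 2 + B ^ 2).
  { rewrite <- (Rmult_1_r (A ^ 2 + B ^ 2)) at 2.
    apply Rmult_le_compat_l; [generalize (pow2_ge_0 A) (pow2_ge_0 B); lra | exact Hb]. }
  nra.
Qed.

Lemma ball_pairing_bound n u e nu s co si t :
  dotn n u u < 1 -> dotn n e e = 1 -> dotn n nu nu = 1 -> dotn n e nu = 0 ->
  s ^ 2 < 1 -> co ^ 2 + si ^ 2 = 1 ->
  dotn n u e * (2 * s + (1 + s ^ 2) * co * cos t + (1 + s ^ 2) * si * sin t) +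
  dotn n u nu * (0 + - ((1 - s ^ 2) * si) * cos t + (1 - s ^ 2) * co * sin t)
  <= 1 + s ^ 2 + 2 * s * co * cos t + 2 * s * si * sin t.
Proof.
  intros Hu He Hnu Henu Hs Hcs.
  assert (Hb : dotn n u e ^ 2 + dotn n u nu ^ 2 <= 1)
    by (generalize (dotn_bessel2 n u e nu He Hnu Henu); lra).
  assert (HCS : (co * cos t + si * sin t) ^ 2 + (co * sin t - si * cos t) ^ 2 = 1).
  { assert (Ht := sin2_cos2 t). unfold Rsqr in Ht.
    replace 1 with ((co ^ 2 + si ^ 2) * (sin t * sin t + cos t * cos t)) by (rewrite Hcs, Ht; ring).
    ring. }
  generalize (disc_pairing_bound s _ _ (dotn n u e) (dotn n u nu) Hs HCS Hb). lra.
Qed.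

Lemma harmonic_disc_map_bound n f e nu zx zy r co si :
  harmonic_on_disc n f -> (forall x y, in_disc x y -> in_ball n (fpt f x y)) ->
  dotn n e e = 1 -> dotn n nu nu = 1 -> dotn n e nu = 0 ->
  in_disc zx zy -> co ^ 2 + si ^ 2 = 1 -> 0 < r < 1 ->
  let s := dotn n (fpt f zx zy) e in
  r * (1 - zx ^ 2 - zy ^ 2) *
    ((1 + s ^ 2) * (co * dotn n (fx f zx zy) e + si * dotn n (fy f zx zy) e) +
     (1 - s ^ 2) * (co * dotn n (fy f zx zy) nu - si * dotn n (fx f zx zy) nu))
  <= 2 * (1 - s ^ 2).
Proof.
  intros Hf Hball He Hnu Henu Hz Hcs Hr s.
  assert (Hs : s ^ 2 < 1).
  { generalize (dotn_unit_le n (fpt f zx zy) e He) (in_ball_dotn _ _ (Hball zx zy Hz)). fold s. lra. }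
  set (U1 := mob_pull zx zy (fun x y => dotn n (fpt f x y) e) r).
  set (U2 := mob_pull zx zy (fun x y => dotn n (fpt f x y) nu) r).
  assert (HU1 : forall t, continuous U1 t) by (intro; eapply continuity_2d_pt_continuous_snd,
    pullG_cont; [exact Hz | apply harmonic_dotn, Hf | lra]).
  assert (HU2 : forall t, continuous U2 t) by (intro; eapply continuity_2d_pt_continuous_snd,
    pullG_cont; [exact Hz | apply harmonic_dotn, Hf | lra]).
  assert (I1 := harmonic_pull_trig zx zy Hz _ _ _ _ _ _ _ (harmonic_dotn n f e Hf) r
    (2 * s) ((1 + s ^ 2) * co) ((1 + s ^ 2) * si) Hr). fold U1 in I1.
  assert (I2 := harmonic_pull_trig zx zy Hz _ _ _ _ _ _ _ (harmonic_dotn n f nu Hf) r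
    0 (- ((1 - s ^ 2) * si)) ((1 - s ^ 2) * co) Hr). fold U2 in I2.
  assert (Hpt : forall t,
    U1 t * (2 * s + (1 + s ^ 2) * co * cos t + (1 + s ^ 2) * si * sin t) +
    U2 t * (0 + - ((1 - s ^ 2) * si) * cos t + (1 - s ^ 2) * co * sin t)
    <= 1 + s ^ 2 + 2 * s * co * cos t + 2 * s * si * sin t).
  { intro t. unfold U1, U2, mob_pull. apply ball_pairing_bound; try assumption.
    apply in_ball_dotn, Hball, mob_in_disc; [exact Hz | lra]. }
  clearbody U1 U2.
  apply period_int_le in Hpt; [|intro; continuity_R; first [apply HU1 | apply HU2] ..].
  rewrite period_int_plus, I1, I2, period_int_trig in Hpt
    by (intro; continuity_R; first [apply HU1 | apply HU2]).
  unfold mob_scale in Hpt.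
  cbv beta in Hpt. fold s in Hpt.
  apply (Rmult_le_reg_l PI); [apply PI_RGT_0|]. lra.
Qed.

Lemma conformal_frame n X Y e co si :
  dotn n X X = dotn n Y Y -> dotn n X Y = 0 -> 0 < dotn n X X ->
  dotn n e e = 1 -> co ^ 2 + si ^ 2 = 1 -> co * dotn n Y e = si * dotn n X e ->
  exists nu, dotn n nu nu = 1 /\ dotn n e nu = 0 /\
    co * dotn n X e + si * dotn n Y e <= co * dotn n Y nu - si * dotn n X nu.
Proof.
  intros HXY HXY0 HX He Hcs Hpar.
  set (lam := sqrt (dotn n X X)).
  assert (Hlam : 0 < lam) by (apply sqrt_lt_R0, HX).
  assert (Hlam2 : dotn n X X = lam ^ 2) by (unfold lam; rewrite <- Rsqr_pow2, Rsqr_sqrt; lra).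
  assert (HYX : dotn n Y X = 0) by (rewrite dotn_comm; exact HXY0).
  assert (Htan : (co * dotn n X e + si * dotn n Y e) ^ 2 <= lam ^ 2).
  { rewrite <- (Rmult_1_r (lam ^ 2)), <- He.
    replace (co * dotn n X e + si * dotn n Y e) with (dotn n (fun i => co * X i + si * Y i) e)
      by apply dotn_linear_l.
    replace (lam ^ 2) with (dotn n (fun i => co * X i + si * Y i) (fun i => co * X i + si * Y i)).
    - apply dotn_cauchy_schwarz.
    - rewrite dotn_linear_l, !dotn_linear_r, HXY0, HYX, <- HXY, Hlam2.
      rewrite <- (Rmult_1_l (lam ^ 2)) at 3. rewrite <- Hcs. ring. }
  exists (fun i => (- si / lam) * X i + (co / lam) * Y i).
  split; [|split].
  - rewrite dotn_linear_l, !dotn_linear_r, HXY0, HYX, <- HXY, Hlam2.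
    field_simplify; [|lra]. rewrite <- Hcs. field. lra.
  - rewrite dotn_linear_r, (dotn_comm n e X), (dotn_comm n e Y).
    field_simplify; [|lra]. rewrite Hpar. field. lra.
  - rewrite !dotn_linear_r, HXY0, HYX, <- HXY, Hlam2.
    assert (Hle : co * dotn n X e + si * dotn n Y e <= lam) by nra.
    replace (co * (- si / lam * 0 + co / lam * lam ^ 2) - si * (- si / lam * lam ^ 2 + co / lam * 0))
      with ((co ^ 2 + si ^ 2) * lam) by (field; lra).
    rewrite Hcs. lra.
Qed.

Lemma le_of_forall_lt_1_mul a b : 0 <= b -> (forall r, 0 < r < 1 -> r * a <= b) -> a <= b.
Proof.
  intros Hb H. apply Rnot_lt_le. intro Hlt.
  assert (Ha : 0 < a) by lra.
  assert (Hba : 0 <= b / a < 1).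
  { split; [apply Rdiv_le_0_compat; lra|]. apply Rmult_lt_reg_r with a; [lra|].
    unfold Rdiv. rewrite Rmult_assoc, Rinv_l; lra. }
  specialize (H ((1 + b / a) / 2) ltac:(lra)).
  replace ((1 + b / a) / 2 * a) with ((a + b) / 2) in H by (field; lra). lra.
Qed.

Lemma dotn_gradient_bound n f e zx zy :
  harmonic_on_disc n f ->
  (forall x y, in_disc x y ->
    dotn n (fx f x y) (fx f x y) = dotn n (fy f x y) (fy f x y) /\
    dotn n (fx f x y) (fy f x y) = 0) ->
  (forall x y, in_disc x y -> in_ball n (fpt f x y)) ->
  dotn n e e = 1 -> in_disc zx zy ->
  (1 - zx ^ 2 - zy ^ 2) * sqrt (dotn n (fx f zx zy) e ^ 2 + dotn n (fy f zx zy) e ^ 2)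
  <= 1 - dotn n (fpt f zx zy) e ^ 2.
Proof.
  intros Hf Hconf Hball He Hz.
  set (X := fx f zx zy). set (Y := fy f zx zy).
  set (ex := dotn n X e). set (ey := dotn n Y e). set (s := dotn n (fpt f zx zy) e).
  assert (Hs : s ^ 2 < 1).
  { generalize (dotn_unit_le n (fpt f zx zy) e He) (in_ball_dotn _ _ (Hball zx zy Hz)). fold s. lra. }
  assert (Hk : 0 < 1 - zx ^ 2 - zy ^ 2) by (unfold in_disc in Hz; lra).
  destruct (Req_dec (ex ^ 2 + ey ^ 2) 0) as [E|E].
  { rewrite E, sqrt_0, Rmult_0_r. lra. }
  assert (Hal2 : 0 < ex ^ 2 + ey ^ 2) by nra.
  set (al := sqrt (ex ^ 2 + ey ^ 2)).
  assert (Hal : 0 < al) by (apply sqrt_lt_R0, Hal2).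
  assert (Hal_sq : al ^ 2 = ex ^ 2 + ey ^ 2) by (unfold al; rewrite <- Rsqr_pow2, Rsqr_sqrt; lra).
  destruct (Hconf zx zy Hz) as [HXY HXY0]. fold X Y in HXY, HXY0.
  assert (HX : 0 < dotn n X X).
  { generalize (dotn_unit_le n X e He) (dotn_unit_le n Y e He). fold ex ey. lra. }
  assert (Hcs : (ex / al) ^ 2 + (ey / al) ^ 2 = 1)
    by (field_simplify; [|lra]; rewrite <- Hal_sq; field; lra).
  assert (Hdir : ex / al * ex + ey / al * ey = al)
    by (field_simplify; [|lra]; rewrite <- Hal_sq; field; lra).
  destruct (conformal_frame n X Y e (ex / al) (ey / al) HXY HXY0 HX He Hcs)
    as (nu & Hnu & Henu & Hframe); [fold ex ey; field; lra|].
  fold ex ey in Hframe. rewrite Hdir in Hframe.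
  apply le_of_forall_lt_1_mul; [lra|]. intros r Hr.
  generalize (harmonic_disc_map_bound n f e nu zx zy r (ex / al) (ey / al)
                Hf Hball He Hnu Henu Hz Hcs Hr).
  cbv zeta. fold X Y ex ey s. rewrite Hdir.
  intro Hbound.
  assert (0 <= r * (1 - zx ^ 2 - zy ^ 2) * (1 - s ^ 2) *
            (ex / al * dotn n Y nu - ey / al * dotn n X nu - al))
    by (repeat apply Rmult_le_pos; lra).
  nra.
Qed.

Lemma cauchy_schwarz_R2 a b c d : a * c + b * d <= sqrt (a ^ 2 + b ^ 2) * sqrt (c ^ 2 + d ^ 2).
Proof.
  rewrite <- sqrt_mult by nra.
  destruct (Rle_or_lt (a * c + b * d) 0) as [H|H].
  - apply Rle_trans with 0; [exact H | apply sqrt_pos].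
  - rewrite <- (sqrt_pow2 (a * c + b * d)) by lra. apply sqrt_le_1_alt.
    generalize (pow2_ge_0 (a * d - b * c)). nra.
Qed.

Lemma dotn_directional_bound n f e zx zy ax ay :
  harmonic_on_disc n f ->
  (forall x y, in_disc x y ->
    dotn n (fx f x y) (fx f x y) = dotn n (fy f x y) (fy f x y) /\
    dotn n (fx f x y) (fy f x y) = 0) ->
  (forall x y, in_disc x y -> in_ball n (fpt f x y)) ->
  dotn n e e = 1 -> in_disc zx zy ->
  (1 - zx ^ 2 - zy ^ 2) * (ax * dotn n (fx f zx zy) e + ay * dotn n (fy f zx zy) e)
  <= sqrt (ax ^ 2 + ay ^ 2) * (1 - dotn n (fpt f zx zy) e ^ 2).
Proof.
  intros Hf Hconf Hball He Hz.
  assert (Hk : 0 <= 1 - zx ^ 2 - zy ^ 2) by (unfold in_disc in Hz; lra).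
  eapply Rle_trans.
  - apply Rmult_le_compat_l; [exact Hk | apply cauchy_schwarz_R2].
  - rewrite Rmult_comm, Rmult_assoc. apply Rmult_le_compat_l; [apply sqrt_pos|].
    rewrite Rmult_comm. apply dotn_gradient_bound; assumption.
Qed.

Lemma schwarz_pick_segment (h dh : R -> R) r :
  0 <= r < 1 ->
  (forall t, 0 <= t <= 1 -> is_derive h t (dh t)) ->
  (forall t, 0 <= t <= 1 -> h t ^ 2 < 1) ->
  (forall t, 0 <= t <= 1 -> (1 - t ^ 2 * r ^ 2) * dh t <= r * (1 - h t ^ 2)) ->
  h 1 <= (r + h 0) / (1 + r * h 0).
Proof.
  intros Hr Hd Hh Hdh.
  set (Q := fun t => (1 + h t) / (1 - h t) * ((1 - t * r) / (1 + t * r))).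
  set (dQ := fun t => 2 / ((1 - h t) ^ 2 * (1 + t * r) ^ 2) *
                      ((1 - t ^ 2 * r ^ 2) * dh t - r * (1 - h t ^ 2))).
  assert (HQ : Q 1 <= Q 0).
  { apply (le_of_is_derive_nonpos Q dQ); [lra| |].
    - intros t Ht. assert (H1 := Hh t Ht).
      assert (Hlt : h t < 1) by nra. assert (Hgt : 0 < 1 + t * r) by nra.
      eapply is_derive_eq.
      + apply (is_derive_Rmult (fun t => (1 + h t) / (1 - h t)) (fun t => (1 - t * r) / (1 + t * r))).
        * apply (is_derive_div (fun t => 1 + h t) (fun t => 1 - h t)); [| |lra].
          -- apply (is_derive_plus (fun _ => 1) h); [apply is_derive_const | apply Hd, Ht].
          -- apply (is_derive_minus (fun _ => 1) h); [apply is_derive_const | apply Hd, Ht].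
        * auto_derive; [lra | reflexivity].
      + unfold dQ, minus, plus, opp, zero, mult; simpl. unfold plus; simpl. field. lra.
    - intros t Ht. assert (H1 := Hh t Ht). assert (H2 := Hdh t Ht).
      assert (Hlt : h t < 1) by nra. assert (Hgt : 0 < 1 + t * r) by nra.
      unfold dQ. apply Rmult_le_0_l; [|lra].
      apply Rlt_le, Rdiv_lt_0_compat; [lra|]. apply Rmult_lt_0_compat; apply pow_lt; lra. }
  assert (H0 := Hh 0 ltac:(lra)). assert (H1 := Hh 1 ltac:(lra)).
  unfold Q in HQ. rewrite Rmult_0_l, Rmult_1_l, Rminus_0_r, Rplus_0_r, Rdiv_1 in HQ.
  apply Rmult_le_compat_r with (r := (1 - h 1) * (1 + r) * (1 - h 0)) in HQ;
    [|repeat apply Rmult_le_pos; nra].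
  replace ((1 + h 1) / (1 - h 1) * ((1 - r) / (1 + r)) * ((1 - h 1) * (1 + r) * (1 - h 0)))
    with ((1 + h 1) * (1 - r) * (1 - h 0)) in HQ by (field; nra).
  replace ((1 + h 0) / (1 - h 0) * 1 * ((1 - h 1) * (1 + r) * (1 - h 0)))
    with ((1 + h 0) * (1 - h 1) * (1 + r)) in HQ by (field; nra).
  apply Rmult_le_reg_r with (1 + r * h 0); [nra|].
  unfold Rdiv. rewrite Rmult_assoc, Rinv_l, Rmult_1_r by nra. nra.
Qed.

Lemma mobius_le_compat r x y :
  0 <= r < 1 -> -1 < x -> x <= y -> (r + x) / (1 + r * x) <= (r + y) / (1 + r * y).
Proof.
  intros Hr Hx Hxy.
  assert (Dx : 0 < 1 + r * x) by nra. assert (Dy : 0 < 1 + r * y) by nra.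
  apply Rmult_le_reg_r with ((1 + r * x) * (1 + r * y)); [nra|].
  replace ((r + x) / (1 + r * x) * ((1 + r * x) * (1 + r * y))) with ((r + x) * (1 + r * y))
    by (field; lra).
  replace ((r + y) / (1 + r * y) * ((1 + r * x) * (1 + r * y))) with ((r + y) * (1 + r * x))
    by (field; lra).
  assert (0 <= (y - x) * (1 - r ^ 2)) by (apply Rmult_le_pos; nra).
  nra.
Qed.

Lemma segment_in_disc ax ay t : in_disc ax ay -> 0 <= t <= 1 -> in_disc (t * ax) (t * ay).
Proof. unfold in_disc. intros H Ht. assert (t ^ 2 <= 1) by nra. nra. Qed.

Lemma disc_radius_bound ax ay : in_disc ax ay -> 0 <= sqrt (ax ^ 2 + ay ^ 2) < 1.
Proof.
  unfold in_disc. intro Ha. split; [apply sqrt_pos|].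
  rewrite <- sqrt_1. apply sqrt_lt_1_alt. nra.
Qed.

Lemma dotn_segment_bound n f e ax ay :
  harmonic_on_disc n f ->
  (forall x y, in_disc x y ->
    dotn n (fx f x y) (fx f x y) = dotn n (fy f x y) (fy f x y) /\
    dotn n (fx f x y) (fy f x y) = 0) ->
  (forall x y, in_disc x y -> in_ball n (fpt f x y)) ->
  dotn n e e = 1 -> in_disc ax ay ->
  dotn n (fpt f ax ay) e <=
    (sqrt (ax ^ 2 + ay ^ 2) + dotn n (fpt f 0 0) e) /
    (1 + sqrt (ax ^ 2 + ay ^ 2) * dotn n (fpt f 0 0) e).
Proof.
  intros Hf Hconf Hball He Ha.
  set (r := sqrt (ax ^ 2 + ay ^ 2)).
  assert (Hr2 : r ^ 2 = ax ^ 2 + ay ^ 2) by (unfold r; rewrite <- Rsqr_pow2, Rsqr_sqrt; nra).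
  assert (Hr := disc_radius_bound ax ay Ha). fold r in Hr.
  generalize (schwarz_pick_segment (fun t => dotn n (fpt f (t * ax) (t * ay)) e)
    (fun t => ax * dotn n (fx f (t * ax) (t * ay)) e + ay * dotn n (fy f (t * ax) (t * ay)) e) r Hr).
  rewrite !Rmult_1_l, !Rmult_0_l. intro H; apply H; clear H; intros t Ht;
    assert (Hz := segment_in_disc ax ay t Ha Ht).
  - apply is_derive_Reals.
    replace (ax * dotn n (fx f (t * ax) (t * ay)) e + ay * dotn n (fy f (t * ax) (t * ay)) e)
      with (dotn n (fx f (t * ax) (t * ay)) e * ax + dotn n (fy f (t * ax) (t * ay)) e * ay)
      by ring.
    apply (derivable_pt_lim_comp_2d (fun x y => dotn n (fpt f x y) e)).
    + apply (harmonic_dotn n f e Hf _ _ Hz).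
    + apply is_derive_Reals. auto_derive; [exact I | ring].
    + apply is_derive_Reals. auto_derive; [exact I | ring].
  - generalize (dotn_unit_le n (fpt f (t * ax) (t * ay)) e He) (in_ball_dotn _ _ (Hball _ _ Hz)).
    lra.
  - replace (1 - t ^ 2 * r ^ 2) with (1 - (t * ax) ^ 2 - (t * ay) ^ 2) by (rewrite Hr2; ring).
    apply dotn_directional_bound; assumption.
Qed.

Theorem lemma3p1 (n : nat) (f : nat -> R -> R -> R) :
  (3 <= n)%nat ->
  conformal_minimal_immersion n f ->
  (forall x y, in_disc x y -> in_ball n (fpt f x y)) ->
  forall ax ay, in_disc ax ay ->
    normn n (fpt f ax ay) <=
      (sqrt (ax ^ 2 + ay ^ 2) + normn n (fpt f 0 0)) /
      (1 + sqrt (ax ^ 2 + ay ^ 2) * normn n (fpt f 0 0)).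
Proof.
  intros _ [Hf [_ Hconf]] Hball ax ay Ha.
  assert (Hr := disc_radius_bound ax ay Ha).
  assert (H0 : normn n (fpt f 0 0) < 1) by (apply Hball; unfold in_disc; lra).
  assert (H0pos : 0 <= normn n (fpt f 0 0)) by apply sqrt_pos.
  destruct (Rle_lt_or_eq_dec 0 (normn n (fpt f ax ay)) (sqrt_pos _)) as [Hpos|Hzero].
  - destruct (dotn_unit_direction n _ Hpos) as (e & He & Hdir).
    rewrite <- Hdir.
    eapply Rle_trans; [apply (dotn_segment_bound n f e); assumption|].
    assert (Habs := dotn_unit_le_normn n (fpt f 0 0) e He).
    apply Rabs_le_between in Habs.
    apply mobius_le_compat; lra.
  - rewrite <- Hzero. apply Rdiv_le_0_compat; nra.
Qed.
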